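(* A framed arithmetic divisor is a triple $(L,\xi,\tau)$ where $L$ is a torsion-free abelian group of rank 1, $\xi:L\to\widehat{\mathbf{Z}}$ is a homomorphism generating the $\widehat{\mathbf{Z}}$-module $\operatorname{Hom}(L,\widehat{\mathbf{Z}})$, and $\tau:L\to\mathbf{R}$ is a group homomorphism. Two framed divisors $(L,\xi,\tau)$, $(L',\xi',\tau')$ are isomorphic if there is a group isomorphism $\phi:L\to L'$ with $\xi'\circ\phi=\xi$ and $\tau'\circ\phi=\tau$; let $\operatorname{Pic}_{Fr}(\overline{\operatorname{Spec}\mathbf{Z}})$ be the set of isomorphism classes. For an adele $a=(a_f,a_\infty)\in\mathbb{A}=\mathbb{A}_f\times\mathbf{R}$ of $\mathbf{Q}$ set $\mathcal F(a)=(L_a,\xi_a,\tau_a)$ with $L_a=\{q\in\mathbf{Q}\mid qa_f\in\widehat{\mathbf{Z}}\}$, $\xi_a(x)=xa_f$, $\tau_a(x)=xa_\infty$. Then $\mathcal F$ induces a canonical bijection between $Y_\mathbf{Q}=\mathbf{Q}^\times\backslash\mathbb{A}$ and $\operatorname{Pic}_{Fr}(\overline{\operatorname{Spec}\mathbf{Z}})$. *)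

From HB Require Import structures.
From mathcomp Require Import all_boot all_order all_algebra.
From mathcomp Require Import reals.
Set Implicit Arguments. Unset Strict Implicit. Unset Printing Implicit Defensive.
Import Order.TTheory GRing.Theory Num.Theory.
Local Open Scope ring_scope.

Definition modQ (m : nat) (x : rat) : rat :=
  x - m%:R * (Num.floor (x / m%:R))%:~R.

(* Finite adeles  A_f = lim_n  Q / nZ   (using A_f = Q + Zhat,
   Q \cap Zhat = Z, hence A_f / n Zhat = Q / nZ).
   An element is a function  a : nat -> rat  where  a n  is the
   representative in [0, n+1) of the class of the adele in Q/(n+1)Z,
   and the classes are compatible under the projections
   Q/(n+1)Z -> Q/(m+1)Z for (m+1) | (n+1).                              *)
Definition is_Af (a : nat -> rat) : Prop :=
  forall n, (0 <= a n) /\ (a n < n.+1%:R) /\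
    (forall m, (m.+1 %| n.+1)%N -> modQ m.+1 (a n) = a m).

Definition is_Zhat (a : nat -> rat) : Prop :=
  is_Af a /\ forall n, a n \is a Num.int.

Definition Af_add (a b : nat -> rat) : nat -> rat := fun n => modQ n.+1 (a n + b n).

(* multiplication of a finite adele by a rational number q = u/d :
   the component mod (n+1) of q*a is q * (component mod (n+1)d of a),
   reduced mod (n+1). *)
Definition Af_scale (q : rat) (a : nat -> rat) : nat -> rat :=
  fun n => modQ n.+1 (q * a ((n.+1 * `|denq q|)%N.-1)).

Definition Zhat_mul (c z : nat -> rat) : nat -> rat := fun n => modQ n.+1 (c n * z n).

Definition adele (R : realType) := ((nat -> rat) * R)%type.
Definition is_adele (R : realType) (a : adele R) : Prop := is_Af a.1.

Definition Q_act (R : realType) (q : rat) (a : adele R) : adele R :=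
  (Af_scale q a.1, ratr q * a.2).

Definition Qx_equiv (R : realType) (a b : adele R) : Prop :=
  exists q : rat, q != 0 /\ b = Q_act q a.

(* Framed divisor data: a group L, presented as a subset [fd_dom] of an
   ambient abelian group [fd_carrier] (for an abstract group take the
   whole carrier), together with xi : L -> Zhat and tau : L -> R. *)
Record fdata (R : realType) := FData {
  fd_carrier : zmodType;
  fd_dom : fd_carrier -> Prop;
  fd_xi : fd_carrier -> nat -> rat;
  fd_tau : fd_carrier -> R }.
Arguments fd_carrier {R} D : rename.
Arguments fd_dom {R} D _ : rename.
Arguments fd_xi {R} D _ _ : rename.
Arguments fd_tau {R} D _ : rename.

Definition is_subgroup (G : zmodType) (L : G -> Prop) : Prop :=
  L 0 /\ forall x y, L x -> L y -> L (x - y).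

Definition torsion_free (G : zmodType) (L : G -> Prop) : Prop :=
  forall x, L x -> forall n : nat, (0 < n)%N -> x *+ n = 0 -> x = 0.

Definition rank_one (G : zmodType) (L : G -> Prop) : Prop :=
  (exists x, L x /\ x != 0) /\
  forall x y, L x -> L y ->
    exists m n : int, ((m != 0) || (n != 0)) /\ x *~ m + y *~ n = 0.

Definition is_hom_Zhat (G : zmodType) (L : G -> Prop) (phi : G -> nat -> rat) : Prop :=
  (forall x, L x -> is_Zhat (phi x)) /\
  (forall x y, L x -> L y -> phi (x + y) = Af_add (phi x) (phi y)).

Definition is_hom_R (R : realType) (G : zmodType) (L : G -> Prop) (f : G -> R) : Prop :=
  forall x y, L x -> L y -> f (x + y) = f x + f y.

Definition framed (R : realType) (D : fdata R) : Prop :=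
  let L := fd_dom D in
  is_subgroup L /\ torsion_free L /\ rank_one L /\
  is_hom_Zhat L (fd_xi D) /\
  (forall phi, is_hom_Zhat L phi ->
     exists c, is_Zhat c /\ forall x, L x -> phi x = Zhat_mul c (fd_xi D x)) /\
  is_hom_R L (fd_tau D).

Definition fd_iso (R : realType) (D D' : fdata R) : Prop :=
  exists phi : fd_carrier D -> fd_carrier D',
    (forall x, fd_dom D x -> fd_dom D' (phi x)) /\
    (forall x y, fd_dom D x -> fd_dom D y -> phi (x + y) = phi x + phi y) /\
    (forall x y, fd_dom D x -> fd_dom D y -> phi x = phi y -> x = y) /\
    (forall y, fd_dom D' y -> exists x, fd_dom D x /\ phi x = y) /\
    (forall x, fd_dom D x -> fd_xi D' (phi x) = fd_xi D x) /\
    (forall x, fd_dom D x -> fd_tau D' (phi x) = fd_tau D x).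

Definition abstract_fd (R : realType) (L : zmodType) (xi : L -> nat -> rat) (tau : L -> R)
  : fdata R := @FData R L (fun _ => True) xi tau.

Definition F_adele (R : realType) (a : adele R) : fdata R :=
  @FData R rat (fun q => is_Zhat (Af_scale q a.1))
    (fun q => Af_scale q a.1) (fun q => ratr q * a.2).

(* The heart of the proof
   is a divisibility criterion in Zhat: if be vanishes modulo every s modulo
   which al vanishes, then be = c al, because the solutions of c al = be modulo
   the various s form an inverse system of nonempty finite sets, which has a
   compatible element by Koenig's lemma.  For D in L_a, a homomorphism
   L_a -> Zhat is determined by its value at D, and that value satisfies the
   criterion against al = xi_a(D); so xi_a generates Hom(L_a, Zhat) and F(a) is
   framed.  An isomorphism F(a) ~ F(b) is an additive map between subgroups of
   Q, hence multiplication by some r, which forces b = r^-1 a.  Conversely, a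
   framed (L, xi, tau) embeds into Q by sending a nonzero x0 to 1; its image M
   lies in L_al for al = xi(x0), and the generation property forbids M to be
   smaller: otherwise some prime power p^j divides a denominator in L_al but
   none in M, and the element of Zhat concentrated at p with value p^(j-1)
   gives a homomorphism M -> Zhat that is not a multiple of al. *)

From HB Require Import structures.
From mathcomp Require Import all_boot all_order all_algebra.
From mathcomp Require Import boolp reals.
From mathcomp Require Import zify ring lra.
Import Order.TTheory GRing.Theory Num.Theory.

Set Implicit Arguments. Unset Strict Implicit. Unset Printing Implicit Defensive.

(** * Inverse limits of finite sets of residues *)

Section ProfiniteChoice.

Variable P : nat -> nat -> bool.
Hypothesis P_mod : forall m M c, 0 < m -> m %| M -> 0 < M -> P M c -> P m (c %% m).
Hypothesis P_exists : forall M, 0 < M -> exists c, P M c.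

Definition extendable m c :=
  c < m /\ forall M, 0 < M -> m %| M -> exists2 c', P M c' & c' %% m = c.

Lemma extendable1 : extendable 1 0.
Proof.
split=> // M M0 _; have [c Pc] := P_exists M0.
by exists c; rewrite ?modn1.
Qed.

Lemma common_multiple (B : nat -> nat -> Prop) K :
  (forall c N N', 0 < N' -> N %| N' -> B c N -> B c N') ->
  (forall c, c < K -> exists2 N, 0 < N & B c N) ->
  exists2 N, 0 < N & forall c, c < K -> B c N.
Proof.
move=> B_up; elim: K => [|K IHK] hB; first by exists 1.
have [N N0 BN] := IHK (fun c cK => hB c (ltnW cK)).
have [N' N'0 BN'] := hB K (ltnSn K).
have NN'0 : 0 < N * N' by rewrite muln_gt0 N0.
exists (N * N') => // c; rewrite ltnS leq_eqVlt => /orP[/eqP-> | cK].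
  exact: B_up (dvdn_mull _ (dvdnn _)) BN'.
exact: B_up (dvdn_mulr _ (dvdnn _)) (BN c cK).
Qed.

(* Koenig's lemma: among the finitely many lifts of [c] modulo [M], one stays
   extendable, since otherwise a common multiple of the moduli refuting each
   lift would have no admissible residue reducing to [c]. *)
Lemma extendable_lift m M c : 0 < m -> m %| M -> 0 < M -> extendable m c ->
  exists c', extendable M c' /\ c' %% m = c.
Proof.
move=> m0 mM M0 [cm ext_c]; apply: contrapT => no_lift.
pose refutes c' N := M %| N /\
  (c' %% m = c -> forall c'', P N c'' -> c'' %% M <> c').
have [N N0 refN] : exists2 N, 0 < N & forall c', c' < M -> refutes c' N.
  apply: common_multiple => [c' N N' N'0 NN' [MN ref] | c' c'M].
    split; first exact: dvdn_trans NN'.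
    move=> c'm c'' Pc''; rewrite -(modn_dvdm _ MN).
    by apply: ref => //; exact: P_mod (dvdn_gt0 N'0 NN') NN' N'0 Pc''.
  have [c'm | c'm] := eqVneq (c' %% m) c; last first.
    by exists M => //; split => // /eqP; rewrite (negbTE c'm).
  have : ~ extendable M c' by move=> ext'; apply: no_lift; exists c'.
  move=> /not_andP[/(_ c'M) [] | /existsNP[N /not_implyP[N0 /not_implyP[MN]]]].
  move=> no_sol; exists N => //; split=> // _ c'' Pc'' e.
  by apply: no_sol; exists c''.
have [c'' Pc'' c''m] := ext_c N N0 (dvdn_trans mM (proj1 (refN 0 M0))).
have lt_c'' : c'' %% M < M by rewrite ltn_pmod.
have [_ /(_ _ c'' Pc'')] := refN _ lt_c''; apply=> //.
by rewrite (modn_dvdm _ mM).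
Qed.

Lemma dvdn_fact_fact j k : j <= k -> j`! %| k`!.
Proof. by move=> /bin_fact <-; rewrite mulnCA dvdn_mulr. Qed.

Fixpoint fact_chain k : {c | extendable k`! c} :=
  if k is k'.+1 then
    let (c, ext_c) := fact_chain k' in
    let (c', ext_c') := cid (extendable_lift (fact_gt0 k') (dvdn_fact_fact (leqnSn k'))
                                             (fact_gt0 k'.+1) ext_c) in
    exist _ c' (proj1 ext_c')
  else exist _ 0 extendable1.

Lemma fact_chain_mod j k : j <= k -> sval (fact_chain k) %% j`! = sval (fact_chain j).
Proof.
move=> /subnK <-; elim: (k - j) => [|i IHi].
  by rewrite add0n modn_small //; case: (svalP (fact_chain j)).
rewrite addSn -{}IHi -(modn_dvdm _ (dvdn_fact_fact (leq_addl i j))) /=.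
case: (fact_chain (i + j)) => c ext_c /=.
by case: cid => c' [_ ->].
Qed.

Theorem profinite_choice : exists C : nat -> nat,
  [/\ forall n, C n < n.+1,
      forall m n, m.+1 %| n.+1 -> C n %% m.+1 = C m &
      forall n, P n.+1 (C n)].
Proof.
have dvdn_fact_self n : n.+1 %| n.+1`! by rewrite factS dvdn_mulr.
exists (fun n => sval (fact_chain n.+1) %% n.+1); split=> [n | m n mn | n].
- by rewrite ltn_pmod.
- rewrite (modn_dvdm _ mn) -(modn_dvdm _ (dvdn_fact_self m)).
  by rewrite fact_chain_mod // dvdn_leq.
- have [_ ext] := svalP (fact_chain n.+1).
  have [c Pc <-] := ext _ (fact_gt0 _) (dvdnn _).
  rewrite modn_dvdm //; exact: P_mod (dvdn_fact_self n) (fact_gt0 _) Pc.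
Qed.

End ProfiniteChoice.

Section LinearCongruences.

Variables A B : nat -> nat.
Hypothesis A_mod : forall m M, 0 < m -> m %| M -> 0 < M -> A M %% m = A m.
Hypothesis B_mod : forall m M, 0 < m -> m %| M -> 0 < M -> B M %% m = B m.
Hypothesis B_lt : forall M, 0 < M -> B M < M.
Hypothesis B_eq0 : forall s, 0 < s -> A s = 0 -> B s = 0.

Lemma lin_congr_solvable M : 0 < M -> exists c, (c * A M) %% M == B M.
Proof.
move=> M0; have [A0 | A_gt0] := posnP (A M).
  by exists 0; rewrite mul0n mod0n eq_sym B_eq0.
set g := gcdn (A M) M.
have g0 : 0 < g by rewrite gcdn_gt0 M0 orbT.
have gM : g %| M := dvdn_gcdr _ _.
have Ag : A g = 0 by rewrite -(A_mod g0 gM M0); apply/eqP; exact: dvdn_gcdl.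
have gB : g %| B M by rewrite /dvdn (B_mod g0 gM M0) B_eq0.
have [u v Bezout _] := egcdnP M A_gt0.
exists (u * (B M %/ g)); apply/eqP.
rewrite mulnAC Bezout mulnDl mulnAC modnMDl mulnC divnK // modn_small //.
exact: B_lt.
Qed.

Lemma lin_congr_mod m M c : 0 < m -> m %| M -> 0 < M ->
  (c * A M) %% M == B M -> ((c %% m) * A m) %% m == B m.
Proof.
move=> m0 mM M0 /eqP sol; apply/eqP.
by rewrite -(A_mod m0 mM M0) modnMm -(modn_dvdm _ mM) sol B_mod.
Qed.

Lemma lin_congr_compatible_solution : exists C : nat -> nat,
  [/\ forall n, C n < n.+1,
      forall m n, m.+1 %| n.+1 -> C n %% m.+1 = C m &
      forall n, (C n * A n.+1) %% n.+1 = B n.+1].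
Proof.
have [C [C_lt C_mod C_sol]] := profinite_choice lin_congr_mod lin_congr_solvable.
by exists C; split=> // n; apply/eqP.
Qed.

End LinearCongruences.

(** * Prime powers and the Chinese remainder theorem *)

Lemma prime_power_jump (Q : nat -> Prop) p k : Q 1 -> ~ Q (p ^ k) ->
  exists j, [/\ 0 < j, j <= k, Q (p ^ j.-1) & ~ Q (p ^ j)].
Proof.
move=> Q1; elim: k => [|k IHk] Qk; first by rewrite expn0 in Qk.
have [Qpk | nQpk] := pselect (Q (p ^ k)); first by exists k.+1.
by have [j [j0 jk Qj nQj]] := IHk nQpk; exists j; split=> //; apply: leqW.
Qed.

Lemma prime_power_obstruction (Q : nat -> Prop) : Q 1 ->
  (forall s t, 0 < s -> Q s -> t %| s -> Q t) ->
  (forall s t, Q s -> Q t -> coprime s t -> Q (s * t)) ->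
  forall d, 0 < d -> ~ Q d ->
  exists p j, [/\ prime p, 0 < j, p ^ j %| d, Q (p ^ j.-1) & ~ Q (p ^ j)].
Proof.
move=> Q1 Q_dvd Q_coprime d; elim: d {-2}d (leqnn d) => [|N IHN] d dN d0 nQd.
  by move: d0; rewrite leqn0 in dN; rewrite (eqP dN).
have d_gt1 : 1 < d by case: d {dN} d0 nQd => [|[|d]] // _ /(_ Q1).
pose p := pdiv d; have p_pr : prime p := pdiv_prime d_gt1.
have dE := partnC p d0.
have [Qp | nQp] := pselect (Q d`_p); last first.
  have nQpk : ~ Q (p ^ logn p d) by rewrite -p_part.
  have [j [j0 jk Qj nQj]] := prime_power_jump Q1 nQpk.
  exists p, j; split=> //; apply: dvdn_trans (dvdn_exp2l p jk) _.
  by rewrite -p_part dvdn_part.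
have nQp' : ~ Q d`_p^'.
  by move=> Qp'; apply: nQd; rewrite -dE; apply: Q_coprime; rewrite ?coprime_partC.
have p'_lt : d`_p^' < d.
  rewrite -{2}dE -{1}(mul1n d`_p^') ltn_pmul2r ?part_gt0 // p_part_gt1.
  by rewrite mem_primes p_pr d0 pdiv_dvd.
have [q [j [q_pr j0 qjd Qj nQj]]] :=
  IHN _ (leq_trans p'_lt dN) (part_gt0 _ _) nQp'.
exists q, j; split=> //; exact: dvdn_trans qjd (dvdn_part _ _).
Qed.

(* The residue modulo [N] of the profinite integer whose [p]-adic component is
   [p ^ j.-1] and whose other components vanish. *)
Definition ppart_residue (p j N : nat) : nat :=
  chinese N`_p N`_p^' (p ^ j.-1) 0.

Lemma eqn_mod_partC p x y m : 0 < m ->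
  x = y %[mod m`_p] -> x = y %[mod m`_p^'] -> x = y %[mod m].
Proof.
move=> m0 eq_p eq_p'; apply/eqP.
by rewrite -(partnC p m0) chinese_remainder ?coprime_partC // eq_p eq_p' !eqxx.
Qed.

Lemma ppart_residue_mod p j m M : 0 < m -> m %| M -> 0 < M ->
  ppart_residue p j M = ppart_residue p j m %[mod m].
Proof.
move=> m0 mM M0; apply: (eqn_mod_partC (p := p) m0).
- rewrite -(modn_dvdm _ (partn_dvd p M0 mM)) /ppart_residue.
  by rewrite !chinese_modl ?coprime_partC // (modn_dvdm _ (partn_dvd p M0 mM)).
- rewrite -(modn_dvdm _ (partn_dvd p^' M0 mM)) /ppart_residue.
  by rewrite !chinese_modr ?coprime_partC // (modn_dvdm _ (partn_dvd p^' M0 mM)) !mod0n.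
Qed.

Lemma ppart_residue_mod0 p j s : prime p -> 0 < s -> ~~ (p ^ j %| s) ->
  ppart_residue p j s %% s = 0.
Proof.
move=> p_pr s0 pj_s; rewrite -(mod0n s); apply: (eqn_mod_partC (p := p) s0).
- rewrite /ppart_residue chinese_modl ?coprime_partC // p_part mod0n; apply/eqP.
  apply: dvdn_exp2l; move: pj_s; rewrite pfactor_dvdn // -ltnNge.
  by case: j.
- by rewrite /ppart_residue chinese_modr ?coprime_partC.
Qed.

Lemma ppart_residue_neq0 p j : prime p -> 0 < j ->
  ppart_residue p j (p ^ j) %% p ^ j != 0.
Proof.
move=> p_pr j0; have pj_p : (p ^ j)`_p = p ^ j by rewrite p_part pfactorK.
have := chinese_modl (coprime_partC p (p ^ j) (p ^ j)) (p ^ j.-1) 0.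
rewrite -/(ppart_residue p j (p ^ j)) pj_p => ->.
by rewrite modn_small -?lt0n ?expn_gt0 ?prime_gt0 // ltn_exp2l ?prime_gt1 ?prednK.
Qed.

(** * Congruences of rationals *)

Local Open Scope ring_scope.

Definition eqmodQ (m x y : rat) : Prop := exists k : int, x = y + m * k%:~R.

Lemma eqmodQ_refl m x : eqmodQ m x x.
Proof. by exists 0; rewrite mulr0 addr0. Qed.

Lemma eqmodQ_sym m x y : eqmodQ m x y -> eqmodQ m y x.
Proof. by case=> k ->; exists (- k); rewrite intrN; ring. Qed.

Lemma eqmodQ_trans m x y z : eqmodQ m x y -> eqmodQ m y z -> eqmodQ m x z.
Proof. by case=> k -> [l ->]; exists (l + k); rewrite intrD; ring. Qed.

Lemma eqmodQD m x y x' y' : eqmodQ m x y -> eqmodQ m x' y' -> eqmodQ m (x + x') (y + y').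
Proof. by case=> k -> [l ->]; exists (k + l); rewrite intrD; ring. Qed.

Lemma eqmodQMzl m x y (z : int) : eqmodQ m x y -> eqmodQ m (z%:~R * x) (z%:~R * y).
Proof. by case=> k ->; exists (z * k); rewrite intrM; ring. Qed.

Lemma eqmodQMl m x y q : eqmodQ m x y -> eqmodQ (q * m) (q * x) (q * y).
Proof. by case=> k ->; exists k; ring. Qed.

Lemma eqmodQ_dvdz m x y (j : int) : eqmodQ (m * j%:~R) x y -> eqmodQ m x y.
Proof. by case=> k ->; exists (j * k); rewrite intrM; ring. Qed.

Lemma eqmodQ_dvdn (m M : nat) x y : (m %| M)%N -> eqmodQ M%:R x y -> eqmodQ m%:R x y.
Proof. by move=> /dvdnP[k ->]; rewrite natrM mulrC => /(eqmodQ_dvdz (j := k%:Z)). Qed.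

Lemma eqmodQ_int (m : int) x y : eqmodQ m%:~R x y -> x \is a Num.int -> y \is a Num.int.
Proof.
case=> k -> /intrP[z xz]; apply/intrP; exists (z - m * k).
by rewrite intrB intrM -xz; ring.
Qed.

Lemma natr_absz_denq (q : rat) : (`|denq q|%:R : rat) = (denq q)%:~R.
Proof. by rewrite natr_absz gtr0_norm // denq_gt0. Qed.

Lemma absz_denq_gt0 (q : rat) : (0 < `|denq q|)%N.
Proof. by rewrite absz_gt0 denq_eq0. Qed.

Lemma eqmodQ_scale_den q (n : nat) x y :
  eqmodQ (n * `|denq q|)%N%:R x y -> eqmodQ n%:R (q * x) (q * y).
Proof.
move=> /(eqmodQMl q); rewrite natrM natr_absz_denq.
have -> : q * (n%:R * (denq q)%:~R) = n%:R * (numq q)%:~R by rewrite numqE; ring.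
exact: eqmodQ_dvdz.
Qed.

Lemma modQ_itv (m : nat) x : (0 < m)%N -> 0 <= modQ m x < m%:R.
Proof.
move=> m0; rewrite /modQ; have m_gt0 : 0 < (m%:R : rat) by rewrite ltr0n.
have /andP[fl_le lt_fl] := floor_itv (x / m%:R).
rewrite ler_pdivlMr // in fl_le; rewrite intrD ltr_pdivrMr // in lt_fl.
by apply/andP; split; [rewrite subr_ge0 mulrC | rewrite ltrBlDr; lra].
Qed.

Lemma eqmodQ_modQ (m : nat) x : eqmodQ m%:R x (modQ m x).
Proof. by exists (Num.floor (x / m%:R)); rewrite /modQ; ring. Qed.

Lemma eqmodQ_itv_eq (m : nat) y y' : (0 < m)%N ->
  0 <= y < m%:R -> 0 <= y' < m%:R -> eqmodQ m%:R y y' -> y = y'.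
Proof.
move=> m0 /andP[y_ge0 y_lt] /andP[y'_ge0 y'_lt] [k yE].
have m_gt0 : 0 < (m%:R : rat) by rewrite ltr0n.
suff k0 : k = 0 by rewrite yE k0 mulr0 addr0.
have : m%:R * k%:~R < (m%:R : rat) * 1%:~R by rewrite mulr1; lra.
have : (m%:R : rat) * (-1)%:~R < m%:R * k%:~R by rewrite mulrN1; lra.
by rewrite !ltr_pM2l // !ltr_int; lia.
Qed.

Lemma modQ_unique (m : nat) x y : (0 < m)%N ->
  0 <= y < m%:R -> eqmodQ m%:R x y -> modQ m x = y.
Proof.
move=> m0 y_itv xy; apply: eqmodQ_itv_eq (modQ_itv _ m0) y_itv _ => //.
exact: eqmodQ_trans (eqmodQ_sym (eqmodQ_modQ m x)) xy.
Qed.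

Lemma eq_modQ (m : nat) x y : (0 < m)%N -> eqmodQ m%:R x y -> modQ m x = modQ m y.
Proof.
move=> m0 xy; apply: modQ_unique (modQ_itv _ m0) _ => //.
exact: eqmodQ_trans xy (eqmodQ_modQ _ _).
Qed.

Lemma modQ0 (m : nat) : (0 < m)%N -> modQ m 0 = 0.
Proof. by move=> m0; apply: modQ_unique (eqmodQ_refl _ _); rewrite // lexx ltr0n. Qed.

Lemma modQ_int (m : nat) x : x \is a Num.int -> modQ m x \is a Num.int.
Proof. by move=> x_int; rewrite /modQ rpredB ?rpredM ?natr_int ?intr_int. Qed.

Lemma modQ_natr (m k : nat) : (0 < m)%N -> modQ m k%:R = (k %% m)%:R.
Proof.
move=> m0; apply: modQ_unique => //; first by rewrite ler0n ltr_nat ltn_pmod.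
by exists (k %/ m)%:Z; rewrite [in LHS](divn_eq k m) natrD natrM pmulrn; ring.
Qed.

(** * Finite adeles and profinite integers *)

Lemma is_Af_itv a n : is_Af a -> 0 <= a n < n.+1%:R.
Proof. by move=> Af_a; have [-> [-> _]] := Af_a n. Qed.

Lemma is_Af_eqmod a m M : is_Af a -> (0 < m)%N -> (m %| M)%N -> (0 < M)%N ->
  eqmodQ m%:R (a M.-1) (a m.-1).
Proof.
move=> Af_a; case: m => // m _; case: M => // M mM _ /=.
have [_ [_ a_mod]] := Af_a M; rewrite -(a_mod m mM); exact: eqmodQ_modQ.
Qed.

Lemma Af_scaleE q a n D : is_Af a -> (`|denq q| %| D)%N -> (0 < D)%N ->
  Af_scale q a n = modQ n.+1 (q * a (n.+1 * D).-1).
Proof.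
move=> Af_a qD D0; apply: eq_modQ => //; apply/eqmodQ_scale_den/eqmodQ_sym.
by apply: (is_Af_eqmod Af_a); rewrite ?muln_gt0 ?absz_denq_gt0 ?dvdn_pmul2l.
Qed.

Lemma is_Af_scale q a : is_Af a -> is_Af (Af_scale q a).
Proof.
move=> Af_a n; have /andP[-> ->] := modQ_itv (q * a (n.+1 * `|denq q|).-1) (ltn0Sn n).
split=> //; split=> // m mn; apply: modQ_unique (modQ_itv _ _) _ => //.
apply: eqmodQ_trans (eqmodQ_dvdn mn (eqmodQ_sym (eqmodQ_modQ _ _))) _.
apply: eqmodQ_trans _ (eqmodQ_modQ _ _); apply/eqmodQ_scale_den.
by apply: (is_Af_eqmod Af_a); rewrite ?muln_gt0 ?absz_denq_gt0 ?dvdn_pmul2r ?absz_denq_gt0.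
Qed.

Lemma Af_scaleDl q r a : is_Af a ->
  Af_scale (q + r) a = Af_add (Af_scale q a) (Af_scale r a).
Proof.
move=> Af_a; apply: funext => n.
pose D := (`|denq q| * `|denq r| * `|denq (q + r)|)%N.
have D0 : (0 < D)%N by rewrite !muln_gt0 !absz_denq_gt0.
have qD : (`|denq q| %| D)%N by rewrite !dvdn_mulr.
have rD : (`|denq r| %| D)%N by rewrite dvdn_mulr ?dvdn_mull.
have qrD : (`|denq (q + r)| %| D)%N by rewrite dvdn_mull.
rewrite /Af_add !(Af_scaleE n Af_a _ D0) //.
by apply: eq_modQ; rewrite // mulrDl; apply: eqmodQD; apply: eqmodQ_modQ.
Qed.

Lemma Af_scaleA q r a : is_Af a -> Af_scale q (Af_scale r a) = Af_scale (q * r) a.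
Proof.
move=> Af_a; apply: funext => n.
pose D' := (`|denq r| * `|denq (q * r)|)%N.
have D'0 : (0 < D')%N by rewrite muln_gt0 !absz_denq_gt0.
pose N := (n.+1 * `|denq q|)%N.
have N0 : (0 < N)%N by rewrite muln_gt0 absz_denq_gt0.
rewrite (Af_scaleE n Af_a (D := `|denq q| * D')) ?dvdn_mull // ?muln_gt0 ?absz_denq_gt0 //.
rewrite {1}/Af_scale -/N (Af_scaleE N.-1 Af_a (D := D')) ?dvdn_mulr // prednK //.
rewrite mulnA -/N -mulrA; apply: eq_modQ => //; apply: eqmodQ_scale_den.
exact/eqmodQ_sym/eqmodQ_modQ.
Qed.

Lemma Af_scale1 a : is_Af a -> Af_scale 1 a = a.
Proof.
move=> Af_a; apply: funext => n; rewrite /Af_scale muln1 mul1r.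
exact: modQ_unique (is_Af_itv n Af_a) (eqmodQ_refl _ _).
Qed.

Lemma Af_scale0 a : Af_scale 0 a = (fun _ => 0).
Proof. by apply: funext => n; rewrite /Af_scale mul0r modQ0. Qed.

Lemma is_Zhat0 : is_Zhat (fun _ => 0).
Proof. by split=> // n; rewrite lexx ltr0n; do 2!split=> //; move=> m _; rewrite modQ0. Qed.

Lemma Af_add0l v : is_Af v -> Af_add (fun _ => 0) v = v.
Proof.
move=> Af_v; apply: funext => n; rewrite /Af_add add0r.
exact: modQ_unique (is_Af_itv n Af_v) (eqmodQ_refl _ _).
Qed.

Lemma Af_addIr u u' v : is_Af u -> is_Af u' -> Af_add u v = Af_add u' v -> u = u'.
Proof.
move=> Af_u Af_u' uv; apply: funext => n.
apply: eqmodQ_itv_eq (is_Af_itv n Af_u) (is_Af_itv n Af_u') _ => //.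
have : eqmodQ n.+1%:R (u n + v n) (u' n + v n).
  apply: eqmodQ_trans (eqmodQ_modQ _ _) _.
  by rewrite [modQ _ _](congr1 (fun f => f n) uv); exact/eqmodQ_sym/eqmodQ_modQ.
by move=> /(eqmodQD (eqmodQ_refl _ (- v n))); rewrite !(addrC (- v n)) !addrK.
Qed.

Definition Zres (z : nat -> rat) (n : nat) : nat := `|Num.floor (z n)|%N.

Lemma ZresE z n : is_Zhat z -> z n = (Zres z n)%:R.
Proof.
move=> [Af_z z_int]; have [z_ge0 _] := Af_z n.
rewrite /Zres natr_absz ger0_norm ?floor_ge0 //.
by apply/esym/eqP; rewrite -intrEfloor.
Qed.

Lemma Zres_lt z n : is_Zhat z -> (Zres z n < n.+1)%N.
Proof. by move=> Zz; have /andP[_] := is_Af_itv n Zz.1; rewrite (ZresE n Zz) ltr_nat. Qed.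

Lemma Zres_mod z m M : is_Zhat z -> (0 < m)%N -> (m %| M)%N -> (0 < M)%N ->
  (Zres z M.-1 %% m)%N = Zres z m.-1.
Proof.
move=> Zz; case: m => // m _; case: M => // M mM _ /=.
have [_ [_ /(_ m mM)]] := Zz.1 M.
by rewrite (ZresE M Zz) (ZresE m Zz) modQ_natr // => /eqP; rewrite eqr_nat => /eqP.
Qed.

Lemma is_Zhat_natr (C : nat -> nat) : (forall n, C n < n.+1)%N ->
  (forall m n, (m.+1 %| n.+1)%N -> (C n %% m.+1)%N = C m) ->
  is_Zhat (fun n => (C n)%:R).
Proof.
move=> C_lt C_mod; split=> n; last exact: natr_int.
by rewrite ler0n ltr_nat C_lt; do 2!split=> //; move=> m mn; rewrite modQ_natr ?C_mod.
Qed.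

Lemma is_Zhat_scale_int (k : int) z : is_Zhat z -> is_Zhat (Af_scale k%:~R z).
Proof.
move=> Zz; split; first exact: is_Af_scale Zz.1.
by move=> n; rewrite /Af_scale modQ_int ?rpredM ?intr_int ?Zz.2.
Qed.

(* [z (d.-1)] is the residue of [z] modulo [d]. *)
Lemma is_Zhat_scale q z : is_Zhat z ->
  is_Zhat (Af_scale q z) <-> z (`|denq q|.-1) = 0.
Proof.
move=> Zz; split=> [[_ /(_ 0%N)] | z0].
  rewrite /Af_scale mul1n => /(eqmodQ_int (m := 1) (eqmodQ_sym (eqmodQ_modQ 1 _))).
  rewrite (ZresE _ Zz); set K := Zres z _ => /intrP[t tE].
  have K_lt : (K < `|denq q|)%N.
    by have := Zres_lt (`|denq q|).-1 Zz; rewrite prednK ?absz_denq_gt0.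
  have qK : (numq q * K%:Z = t * denq q)%R.
    by apply: (@intr_inj rat); rewrite !intrM -tE numqE pmulrn mulrAC.
  have : (`|denq q| %| `|numq q| * K)%N.
    by apply/dvdnP; exists `|t|%N; rewrite -(absz_nat K) -!abszM qK.
  rewrite Gauss_dvdr; last by rewrite coprime_sym coprime_num_den.
  by have [-> // | K_gt0] := posnP K; rewrite gtnNdvd.
split; first exact: is_Af_scale Zz.1.
move=> n; rewrite /Af_scale modQ_int //.
have := is_Af_eqmod Zz.1 (absz_denq_gt0 q) (dvdn_mull n.+1 (dvdnn _)).
rewrite muln_gt0 absz_denq_gt0 z0 => /(_ isT)[k ->].
by rewrite add0r natr_absz_denq mulrA -numqE -intrM intr_int.
Qed.

Lemma Zhat_dvd al be : is_Zhat al -> is_Zhat be ->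
  (forall s, (0 < s)%N -> al s.-1 = 0 -> be s.-1 = 0) ->
  exists c, is_Zhat c /\ be = Zhat_mul c al.
Proof.
move=> Zal Zbe al_be.
have B_lt M : (0 < M)%N -> (Zres be M.-1 < M)%N.
  by move=> M0; have := Zres_lt M.-1 Zbe; rewrite prednK.
have B_eq0 s : (0 < s)%N -> Zres al s.-1 = 0%N -> Zres be s.-1 = 0%N.
  move=> s0 /eqP; rewrite -(eqr_nat rat) -ZresE // => /eqP /(al_be s s0).
  by rewrite (ZresE _ Zbe) => /eqP; rewrite pnatr_eq0 => /eqP.
have [C [C_lt C_mod C_sol]] := lin_congr_compatible_solution
  (fun m M m0 mM M0 => Zres_mod Zal m0 mM M0) (fun m M m0 mM M0 => Zres_mod Zbe m0 mM M0)
  B_lt B_eq0.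
exists (fun n => (C n)%:R); split; first exact: is_Zhat_natr.
apply: funext => n; rewrite /Zhat_mul (ZresE n Zal) -natrM modQ_natr // C_sol /=.
exact: ZresE.
Qed.

Lemma Af_scale_Zhat_mul q c z : is_Zhat c -> is_Zhat z -> is_Zhat (Af_scale q z) ->
  Af_scale q (Zhat_mul c z) = Zhat_mul c (Af_scale q z).
Proof.
move=> Zc Zz Zqz; apply: funext => n.
rewrite /Zhat_mul {1 2}/Af_scale.
set N := (n.+1 * `|denq q|)%N.
have N0 : (0 < N)%N by rewrite muln_gt0 absz_denq_gt0.
apply: eq_modQ => //.
have /intrP[w wE] : q * z N.-1 \is a Num.int.
  have := Zqz.2 n; rewrite /Af_scale -/N.
  exact: (eqmodQ_int (m := n.+1) (eqmodQ_sym (eqmodQ_modQ _ _))).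
have /intrP[t tE] := Zc.2 n.
apply: (@eqmodQ_trans _ _ (c N.-1 * (q * z N.-1))).
  rewrite mulrCA; apply: eqmodQ_scale_den; rewrite -/N prednK //.
  exact/eqmodQ_sym/eqmodQ_modQ.
rewrite wE tE mulrC; apply: (@eqmodQ_trans _ _ (w%:~R * t%:~R)).
  apply: eqmodQMzl; rewrite -tE.
  exact: is_Af_eqmod Zc.1 (ltn0Sn n) (dvdn_mulr _ (dvdnn _)) N0.
by rewrite mulrC; apply/eqmodQMzl/eqmodQ_modQ.
Qed.

(** * Homomorphisms on subgroups *)

Section Subgroups.

Variables (G : zmodType) (L : G -> Prop).
Hypothesis L_subgroup : is_subgroup L.

Lemma subgroupN x : L x -> L (- x).
Proof. by move=> Lx; rewrite -sub0r; apply: L_subgroup.2 => //; exact: L_subgroup.1. Qed.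

Lemma subgroupD x y : L x -> L y -> L (x + y).
Proof. by move=> Lx Ly; rewrite -[y]opprK; apply: L_subgroup.2 => //; exact: subgroupN. Qed.

Lemma subgroupMn x n : L x -> L (x *+ n).
Proof.
move=> Lx; elim: n => [|n IHn]; first exact: L_subgroup.1.
by rewrite mulrS; apply: subgroupD.
Qed.

Lemma additiveMz (H : zmodType) (f : G -> H) :
  (forall x y, L x -> L y -> f (x + y) = f x + f y) ->
  forall x (k : int), L x -> f (x *~ k) = f x *~ k.
Proof.
move=> f_add x k Lx; have L0 := L_subgroup.1.
have f0 : f 0 = 0 by apply: (addrI (f 0)); rewrite -f_add // !addr0.
have f_nat n : f (x *+ n) = f x *+ n.
  elim: n => [|n IHn]; first by rewrite !mulr0n f0.
  by rewrite !mulrS f_add ?IHn //; apply: subgroupMn.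
case: k => n; first exact: f_nat.
rewrite NegzE !mulrNz; apply/eqP.
have Lxn : L (x *+ n.+1) by apply: subgroupMn.
by rewrite -!pmulrn -f_nat -addr_eq0 -f_add ?addNr ?f0 //; apply: subgroupN.
Qed.

Lemma hom_Zhat0 phi : is_hom_Zhat L phi -> phi 0 = (fun _ => 0).
Proof.
move=> [phi_Zhat phi_add]; have L0 := L_subgroup.1.
have Af_phi0 := (phi_Zhat 0 L0).1.
apply: (Af_addIr Af_phi0 is_Zhat0.1 (v := phi 0)).
by rewrite -phi_add // addr0 Af_add0l.
Qed.

Lemma hom_ZhatMz phi : is_hom_Zhat L phi ->
  forall x (k : int), L x -> phi (x *~ k) = Af_scale k%:~R (phi x).
Proof.
move=> hom_phi x k Lx; have [phi_Zhat phi_add] := hom_phi.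
have Af_phix := (phi_Zhat x Lx).1.
have phi_nat n : phi (x *+ n) = Af_scale n%:R (phi x).
  elim: n => [|n IHn]; first by rewrite mulr0n (hom_Zhat0 hom_phi) Af_scale0.
  rewrite mulrS phi_add //; last exact: subgroupMn.
  by rewrite IHn -{1}(Af_scale1 Af_phix) -Af_scaleDl // -mulrS.
case: k => [n|n]; first exact: phi_nat.
have Lxn := subgroupMn n.+1 Lx.
rewrite NegzE mulrNz; apply: (Af_addIr _ (is_Af_scale _ Af_phix) (v := phi (x *+ n.+1))).
  exact: (phi_Zhat _ (subgroupN Lxn)).1.
rewrite -phi_add //; last exact: subgroupN.
rewrite addNr (hom_Zhat0 hom_phi) phi_nat -Af_scaleDl //.
by rewrite intrN addNr Af_scale0.
Qed.

End Subgroups.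

Lemma mulrz_denq_div (x D : rat) : D != 0 -> x *~ denq (x / D) = D *~ numq (x / D).
Proof.
by move=> D0; rewrite -[x *~ _]mulrzr -[D *~ _]mulrzr numqE mulrA mulrCA divff ?mulr1.
Qed.

Lemma additive_rat_scale (L : rat -> Prop) (f : rat -> rat) : is_subgroup L ->
  (forall x y, L x -> L y -> f (x + y) = f x + f y) ->
  forall D x, L D -> D != 0 -> L x -> f x = f D / D * x.
Proof.
move=> L_subgroup f_add D x LD D0 Lx.
have := congr1 f (mulrz_denq_div x D0).
rewrite !(additiveMz L_subgroup f_add) // -[f x *~ _]mulrzr -[f D *~ _]mulrzr numqE.
have den0 : ((denq (x / D))%:~R : rat) != 0 by rewrite intr_eq0 denq_neq0.
by rewrite mulrA => /(mulIf den0) ->; rewrite mulrA mulrAC.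
Qed.

Lemma hom_Zhat_rat_scale (L : rat -> Prop) phi : is_subgroup L -> is_hom_Zhat L phi ->
  forall D x, L D -> D != 0 -> L x -> phi x = Af_scale (x / D) (phi D).
Proof.
move=> L_subgroup hom_phi D x LD D0 Lx.
have := congr1 phi (mulrz_denq_div x D0).
rewrite !(hom_ZhatMz L_subgroup hom_phi) // => /(congr1 (Af_scale (denq (x / D))%:~R^-1)).
have [Af_phiD Af_phix] := ((hom_phi.1 D LD).1, (hom_phi.1 x Lx).1).
rewrite !Af_scaleA // mulVf ?intr_eq0 ?denq_neq0 // Af_scale1 // => ->.
by rewrite mulrC divq_num_den.
Qed.

(** * From adeles to framed divisors *)

Definition Ladele (af : nat -> rat) (q : rat) : Prop := is_Zhat (Af_scale q af).

Lemma Ladele_subgroup af : is_Af af -> is_subgroup (Ladele af).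
Proof.
move=> Af_af; split=> [|x y Lx Ly]; first by rewrite /Ladele Af_scale0; exact: is_Zhat0.
have Ly' : Ladele af (- y).
  by have := is_Zhat_scale_int (-1) Ly; rewrite Af_scaleA // mulN1r.
split; first exact: is_Af_scale.
by move=> n; rewrite Af_scaleDl // /Af_add modQ_int // rpredD ?Lx.2 ?Ly'.2.
Qed.

Lemma Ladele_denq af : is_Af af -> Ladele af (denq (af 0))%:~R.
Proof.
move=> Af_af; split=> [|n]; first exact: is_Af_scale.
rewrite /Af_scale denq_int muln1 modQ_int //.
have [k ->] := is_Af_eqmod Af_af (ltn0Sn 0) (dvd1n n.+1) (ltn0Sn n).
by rewrite mulrDr mulrC -numqE mul1r rpredD ?rpredM ?intr_int.
Qed.

Lemma denqVn (s : nat) : (0 < s)%N -> `|denq (s%:R^-1 : rat)|%N = s.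
Proof. by move=> s0; rewrite -[s%:R]/(s%:Z%:~R) denqVz //; lia. Qed.

Lemma Ladele_hom_generated af phi : is_Af af -> is_hom_Zhat (Ladele af) phi ->
  exists c, is_Zhat c /\ forall x, Ladele af x -> phi x = Zhat_mul c (Af_scale x af).
Proof.
move=> Af_af hom_phi; have L_subgroup := Ladele_subgroup Af_af.
pose D : rat := (denq (af 0))%:~R; have LD : Ladele af D := Ladele_denq Af_af.
have D0 : D != 0 by rewrite intr_eq0 denq_neq0.
have phiE := hom_Zhat_rat_scale L_subgroup hom_phi LD D0.
have Zbe : is_Zhat (phi D) := hom_phi.1 D LD.
have al_be s : (0 < s)%N -> Af_scale D af s.-1 = 0 -> phi D s.-1 = 0.
  move=> s0 al0; have Ls : Ladele af (s%:R^-1 * D).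
    by rewrite /Ladele -Af_scaleA //; apply/(is_Zhat_scale _ LD); rewrite denqVn.
  have := hom_phi.1 _ Ls; rewrite phiE // mulfK //.
  by move=> /(is_Zhat_scale _ Zbe); rewrite denqVn.
have [c [Zc beE]] := Zhat_dvd LD Zbe al_be.
have scaleE x : Af_scale (x / D) (Af_scale D af) = Af_scale x af by rewrite Af_scaleA // divfK.
exists c; split=> // x Lx.
by rewrite phiE // beE Af_scale_Zhat_mul // ?scaleE.
Qed.

Lemma rat_rank_one (x y : rat) :
  exists m n : int, ((m != 0) || (n != 0)) /\ x *~ m + y *~ n = 0.
Proof.
have [-> | x0] := eqVneq x 0; first by exists 1, 0; rewrite mul0rz mulr0z addr0.
exists (numq (y / x)), (- denq (y / x)); rewrite oppr_eq0 denq_neq0 orbT.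
by rewrite mulrNz mulrz_denq_div // subrr.
Qed.

Section AdeleToFramed.

Variable R : realType.

Lemma framed_F_adele (a : adele R) : is_adele a -> framed (F_adele a).
Proof.
move=> Af_a; have L_subgroup := Ladele_subgroup Af_a.
split=> //; split; first by move=> x _ [|n] // _ /eqP; rewrite mulrn_eq0 => /eqP.
split.
  split; last by move=> x y _ _; apply: rat_rank_one.
  by exists (denq (a.1 0))%:~R; rewrite intr_eq0 denq_neq0; split=> //; apply: Ladele_denq.
split; first by split=> // x y _ _; apply: Af_scaleDl.
split; first by move=> phi; apply: Ladele_hom_generated.
by move=> x y _ _ /=; rewrite rmorphD mulrDl.
Qed.

Lemma Qx_equiv_fd_iso (a b : adele R) : is_adele a ->
  Qx_equiv a b -> fd_iso (F_adele a) (F_adele b).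
Proof.
move=> Af_a [q [q0 ->]]; exists (fun x => x / q) => /=.
have scaleE x : Af_scale (x / q) (Af_scale q a.1) = Af_scale x a.1.
  by rewrite Af_scaleA // divfK.
split; first by move=> x; rewrite scaleE.
split; first by move=> x y _ _; rewrite mulrDl.
split; first by move=> x y _ _ /(mulIf (invr_neq0 q0)).
split; first by move=> y Ly; exists (y * q); rewrite mulfK // -Af_scaleA.
split; first by move=> x _; rewrite scaleE.
by move=> x _; rewrite fmorph_div mulrA divfK // fmorph_eq0.
Qed.

Lemma fd_iso_Qx_equiv (a b : adele R) : is_adele a -> is_adele b ->
  fd_iso (F_adele a) (F_adele b) -> Qx_equiv a b.
Proof.
case: b => b1 b2 Af_a Af_b [phi [_ [phi_add [phi_inj [_ [phi_xi phi_tau]]]]]] /=.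
have L_subgroup := Ladele_subgroup Af_a.
pose D : rat := (denq (a.1 0))%:~R; have LD : Ladele a.1 D := Ladele_denq Af_a.
have D0 : D != 0 by rewrite intr_eq0 denq_neq0.
have phiE := additive_rat_scale L_subgroup phi_add LD D0.
pose r := phi D / D.
have r0 : r != 0.
  rewrite mulf_neq0 ?invr_eq0 //; apply: contra D0 => /eqP phiD0.
  apply/eqP/phi_inj => //; first exact: L_subgroup.1.
  by rewrite phiD0 (phiE 0) ?mulr0 //; exact: L_subgroup.1.
have rD0 : r * D != 0 by rewrite mulf_neq0.
exists r^-1; split; first by rewrite invr_eq0.
rewrite /Q_act /=; congr pair.
  have := phi_xi D LD; rewrite phiE // -/r => /(congr1 (Af_scale (r * D)^-1)).
  rewrite !Af_scaleA // mulVf // Af_scale1 // => /= ->.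
  by congr Af_scale; field; rewrite D0 r0.
have tauD : ratr (r * D) * b2 = ratr D * a.2 :> R.
  by rewrite /r -phiE //; exact: phi_tau D LD.
have rDR : ratr (r * D) != 0 :> R by rewrite fmorph_eq0.
have rR : ratr r != 0 :> R by rewrite fmorph_eq0.
apply: (mulfI rDR); rewrite tauD rmorphM fmorphV.
by field.
Qed.

End AdeleToFramed.

(** * From framed divisors to adeles *)

Section RationalSubgroup.

Variable M : rat -> Prop.
Hypothesis M1 : M 1.
Hypothesis MD : forall q q', M q -> M q' -> M (q + q').
Hypothesis MMz : forall q (k : int), M q -> M (q * k%:~R).

Lemma mem_invn_denq q : M q -> M (`|denq q|%:R^-1).
Proof.
move=> Mq; have /coprimezP[[u v] /= uv] : coprimez (numq q) (denq q).
  by rewrite coprimezE coprime_num_den.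
have den0 : ((denq q)%:~R : rat) != 0 by rewrite intr_eq0 denq_neq0.
suff -> : `|denq q|%:R^-1 = q * u%:~R + 1 * v%:~R by apply: MD; apply: MMz.
have uvR : u%:~R * (numq q)%:~R + v%:~R * (denq q)%:~R = 1 :> rat.
  by rewrite -!intrM -intrD uv.
rewrite natr_absz_denq -[q in RHS]divq_num_den mul1r; apply: (mulIf den0).
by rewrite mulVf // -{1}uvR; field.
Qed.

Lemma mem_invn_dvdn s t : (0 < s)%N -> M (s%:R^-1) -> (t %| s)%N -> M (t%:R^-1).
Proof.
move=> s0 Ms /dvdnP[k sE].
suff -> : (t%:R : rat)^-1 = s%:R^-1 * k%:R by exact: MMz k Ms.
have k0 : (k%:R : rat) != 0 by rewrite pnatr_eq0 -lt0n; move: s0; rewrite sE muln_gt0 => /andP[].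
by rewrite sE natrM invfM mulrAC mulVf ?mul1r.
Qed.

Lemma mem_invn_coprime s t : M (s%:R^-1) -> M (t%:R^-1) -> coprime s t ->
  M ((s * t)%N%:R^-1).
Proof.
move=> Ms Mt st; have M0 : M 0 by have := MMz 0 M1; rewrite mulr0.
have [-> | s0] := eqVneq s 0%N; first by rewrite mul0n invr0.
have [-> | t0] := eqVneq t 0%N; first by rewrite muln0 invr0.
have /coprimezP[[u v] /= uv] : coprimez s t by rewrite coprimezE.
have s0R : (s%:R : rat) != 0 by rewrite pnatr_eq0.
have t0R : (t%:R : rat) != 0 by rewrite pnatr_eq0.
suff -> : ((s * t)%N%:R : rat)^-1 = t%:R^-1 * u%:~R + s%:R^-1 * v%:~R.
  by apply: MD; apply: MMz.
have uvR : u%:~R * s%:R + v%:~R * t%:R = 1 :> rat.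
  by rewrite -[s%:R]/(s%:Z%:~R) -[t%:R]/(t%:Z%:~R) -!intrM -intrD uv.
apply: (mulIf (mulf_neq0 s0R t0R)); rewrite natrM mulVf ?mulf_neq0 // -{1}uvR.
by field; rewrite s0R t0R.
Qed.

Lemma mem_of_invn_denq q : M (`|denq q|%:R^-1) -> M q.
Proof. by move=> /(MMz (numq q)); rewrite natr_absz_denq mulrC divq_num_den. Qed.

End RationalSubgroup.

Definition ppart_Zhat (p j : nat) : nat -> rat :=
  fun n => (ppart_residue p j n.+1 %% n.+1)%N%:R.

Lemma is_Zhat_ppart p j : is_Zhat (ppart_Zhat p j).
Proof.
apply: is_Zhat_natr => [n | m n mn]; first by rewrite ltn_pmod.
by rewrite modn_dvdm // (ppart_residue_mod _ _ (ltn0Sn m) mn (ltn0Sn n)).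
Qed.

Lemma Ladele_ppart_Zhat p j q : prime p -> ~~ (p ^ j %| `|denq q|)%N ->
  Ladele (ppart_Zhat p j) q.
Proof.
move=> p_pr pj_q; apply/(is_Zhat_scale _ (is_Zhat_ppart p j)).
by rewrite /ppart_Zhat prednK ?absz_denq_gt0 // ppart_residue_mod0 ?absz_denq_gt0.
Qed.

Lemma ppart_Zhat_neq0 p j : prime p -> (0 < j)%N -> ppart_Zhat p j (p ^ j).-1 != 0.
Proof.
move=> p_pr j0; rewrite /ppart_Zhat prednK ?expn_gt0 ?prime_gt0 //.
by rewrite pnatr_eq0 ppart_residue_neq0.
Qed.

Lemma Zhat_eq0_dvdn z m d : is_Zhat z -> (0 < m)%N -> (m %| d)%N -> (0 < d)%N ->
  z d.-1 = 0 -> z m.-1 = 0.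
Proof.
move=> Zz m0 md d0; rewrite !(ZresE _ Zz) -(Zres_mod Zz m0 md d0).
by move=> /eqP; rewrite pnatr_eq0 => /eqP->; rewrite mod0n.
Qed.

(* If [L_al] were larger than [M], a prime power [p ^ j] would divide a
   denominator in [L_al] but none in [M]; the profinite integer concentrated
   at [p] with value [p ^ j.-1] then defines a map [M -> Zhat] that is not a
   multiple of [al], since [al] vanishes modulo [p ^ j]. *)
Lemma Ladele_sub (M : rat -> Prop) al : is_Zhat al -> M 1 ->
  (forall q q', M q -> M q' -> M (q + q')) ->
  (forall q (k : int), M q -> M (q * k%:~R)) ->
  (forall eps, is_Zhat eps -> (forall q, M q -> Ladele eps q) ->
     exists c, is_Zhat c /\ eps = Zhat_mul c al) ->
  forall q, Ladele al q -> M q.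
Proof.
move=> Zal M1 MD MMz al_gen q /(is_Zhat_scale _ Zal) al0.
apply: (mem_of_invn_denq MMz); apply: contrapT => nMq.
have Minv1 : M (1%:R^-1) by rewrite invr1.
have [p [j [p_pr j0 pj_q _ nMpj]]] := prime_power_obstruction Minv1
  (mem_invn_dvdn MMz) (mem_invn_coprime M1 MD MMz) (absz_denq_gt0 q) nMq.
have M_eps q' : M q' -> Ladele (ppart_Zhat p j) q'.
  move=> Mq'; apply: Ladele_ppart_Zhat p_pr _; apply/negP => pj_q'; apply: nMpj.
  exact: (mem_invn_dvdn MMz (absz_denq_gt0 q') (mem_invn_denq M1 MD MMz Mq') pj_q').
have [c [_ epsE]] := al_gen _ (is_Zhat_ppart p j) M_eps.
have pj0 : (0 < p ^ j)%N by rewrite expn_gt0 prime_gt0.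
have := ppart_Zhat_neq0 p_pr j0; rewrite epsE /Zhat_mul.
by rewrite (Zhat_eq0_dvdn Zal pj0 pj_q (absz_denq_gt0 q)) // mulr0 modQ0.
Qed.

Section FramedToAdele.

Variables (R : realType) (L : zmodType) (x0 : L) (xi : L -> nat -> rat) (tau : L -> R).
Hypothesis L_tf : torsion_free (fun _ : L => True).
Hypothesis L_dep : forall x y : L,
  exists m n : int, ((m != 0) || (n != 0)) /\ x *~ m + y *~ n = 0.
Hypothesis x0_neq0 : x0 != 0.

Lemma mulrz_tf_eq0 (z : L) (k : int) : k != 0 -> z *~ k = 0 -> z = 0.
Proof.
case: k => n n0; first by apply: L_tf; rewrite // lt0n; apply: contra n0 => /eqP->.
by rewrite NegzE mulrNz => /eqP; rewrite oppr_eq0 => /eqP; apply: L_tf.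
Qed.

Definition coord (y : L) (r : rat) :=
  exists u v : int, [/\ v != 0, r = u%:~R / v%:~R & y *~ v = x0 *~ u].

Lemma coord_exists y : exists r, coord y r.
Proof.
have [m [n [mn0 dep]]] := L_dep x0 y.
have n0 : n != 0.
  apply: contra x0_neq0 => /eqP n0; move: dep mn0; rewrite n0 mulr0z addr0 eqxx orbF.
  by move=> /mulrz_tf_eq0 /[apply] ->.
exists ((- m)%:~R / n%:~R), (- m), n; split=> //.
by rewrite mulrNz; apply/eqP; rewrite -addr_eq0 addrC dep.
Qed.

Lemma coord_unique y r r' : coord y r -> coord y r' -> r = r'.
Proof.
move=> [u [v [v0 -> yv]]] [u' [v' [v'0 -> yv']]]; apply/eqP.
rewrite eqr_div ?intr_eq0 // -!intrM eqr_int; apply: contraTT x0_neq0.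
rewrite negbK => uv; apply/eqP/(mulrz_tf_eq0 (k := u * v' - u' * v)).
  by rewrite subr_eq0.
by rewrite mulrzBr !mulrzA -yv -yv' -!mulrzA [v * v']mulrC subrr.
Qed.

Lemma coord_inj y y' r : coord y r -> coord y' r -> y = y'.
Proof.
move=> [u [v [v0 -> yv]]] [u' [v' [v'0 /eqP uv y'v']]].
move: uv; rewrite eqr_div ?intr_eq0 // -!intrM eqr_int => /eqP uv.
apply/eqP; rewrite -subr_eq0; apply/eqP/(mulrz_tf_eq0 (mulf_neq0 v0 v'0)).
by rewrite mulrzBl mulrzA yv [v * v']mulrC mulrzA y'v' -!mulrzA uv mulrC subrr.
Qed.

Lemma coordD y y' r r' : coord y r -> coord y' r' -> coord (y + y') (r + r').
Proof.
move=> [u [v [v0 -> yv]]] [u' [v' [v'0 -> y'v']]].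
exists (u * v' + u' * v), (v * v'); split; first exact: mulf_neq0.
  by rewrite intrD !intrM; field; rewrite !intr_eq0 v0 v'0.
by rewrite mulrzDl mulrzA yv [v * v']mulrC mulrzA y'v' -!mulrzA mulrzDr.
Qed.

Lemma coordMz y r (k : int) : coord y r -> coord (y *~ k) (r * k%:~R).
Proof.
move=> [u [v [v0 -> yv]]]; exists (u * k), v; split=> //; first by rewrite intrM mulrAC.
by rewrite -mulrzA [k * v]mulrC [y *~ _]mulrzA yv -mulrzA.
Qed.

Lemma coord_x0 : coord x0 1.
Proof. by exists 1, 1; rewrite divr1. Qed.

Hypothesis xi_hom : is_hom_Zhat (fun _ : L => True) xi.
Hypothesis xi_gen : forall phi, is_hom_Zhat (fun _ : L => True) phi ->
  exists c, is_Zhat c /\ forall x, True -> phi x = Zhat_mul c (xi x).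
Hypothesis tau_add : is_hom_R (fun _ : L => True) tau.

Let L_subgroup : is_subgroup (fun _ : L => True). Proof. by []. Qed.

Lemma xi_coord y r : coord y r -> xi y = Af_scale r (xi x0).
Proof.
move=> [u [v [v0 -> yv]]]; have [Af_y Af_x0] := ((xi_hom.1 y I).1, (xi_hom.1 x0 I).1).
have := congr1 xi yv; rewrite !(hom_ZhatMz L_subgroup xi_hom) //.
move=> /(congr1 (Af_scale v%:~R^-1)); rewrite !Af_scaleA // mulVf ?intr_eq0 //.
by rewrite Af_scale1 // mulrC => ->.
Qed.

Lemma tau_coord y r : coord y r -> tau y = ratr r * tau x0.
Proof.
move=> [u [v [v0 -> yv]]]; have v0R : (v%:~R : R) != 0 by rewrite intr_eq0.
have := congr1 tau yv; rewrite !(additiveMz L_subgroup tau_add) //.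
rewrite -[tau y *~ v]mulrzr -[tau x0 *~ u]mulrzr => tau_yv.
by apply: (mulIf v0R); rewrite tau_yv fmorph_div !rmorph_int; field.
Qed.

Lemma Ladele_coordP q : Ladele (xi x0) q <-> exists y, coord y q.
Proof.
split=> [|[y /xi_coord xiE]]; last by rewrite /Ladele -xiE; exact: xi_hom.1.
apply: (Ladele_sub (M := fun q => exists y, coord y q) (xi_hom.1 x0 I)) => [|q1 q2 [y1 ?] [y2 ?] | q1 k [y1 ?] | eps Zeps M_eps].
- by exists x0; apply: coord_x0.
- by exists (y1 + y2); apply: coordD.
- by exists (y1 *~ k); apply: coordMz.
pose psi y := sval (cid (coord_exists y)).
have psiP y : coord y (psi y) := svalP (cid (coord_exists y)).
have hom_eps : is_hom_Zhat (fun _ : L => True) (fun y => Af_scale (psi y) eps).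
  split=> [y _ | y y' _ _]; first by apply: M_eps; exists y.
  rewrite -Af_scaleDl; last exact: Zeps.1.
  by congr Af_scale; apply: coord_unique (psiP _) (coordD (psiP y) (psiP y')).
have [c [Zc epsE]] := xi_gen hom_eps; exists c; split=> //.
by rewrite -epsE // (coord_unique (psiP x0) coord_x0) Af_scale1 //; exact: Zeps.1.
Qed.

Lemma F_adele_iso_framed : fd_iso (F_adele (xi x0, tau x0)) (abstract_fd xi tau).
Proof.
have phi_ex q : exists y, (exists y, coord y q) -> coord y q.
  have [[y cy] | no_y] := pselect (exists y, coord y q); first by exists y.
  by exists 0 => /no_y.
pose phi q := sval (cid (phi_ex q)).
have phiP q : Ladele (xi x0) q -> coord (phi q) q.
  by move=> /Ladele_coordP; apply: (svalP (cid (phi_ex q))).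
exists phi => /=; split=> //; split=> [x y Lx Ly | ].
  apply: coord_inj (phiP _ _) (coordD (phiP x Lx) (phiP y Ly)).
  exact (subgroupD (Ladele_subgroup (xi_hom.1 x0 I).1) Lx Ly).
split=> [x y Lx Ly phixy | ].
  by apply: coord_unique (phiP x Lx) _; rewrite phixy; apply: phiP.
split=> [y _ | ].
  have [r cr] := coord_exists y; have Lr : Ladele (xi x0) r by apply/Ladele_coordP; exists y.
  by exists r; split=> //; apply: coord_inj (phiP r Lr) cr.
by split=> x Lx; [apply: xi_coord | apply: tau_coord]; apply: phiP.
Qed.

End FramedToAdele.

Theorem theorem8p5 (R : realType) :
  (* F lands in framed divisors *)
  (forall a : adele R, is_adele a -> framed (F_adele a)) /\
  (* F is constant exactly on Q^x-orbits: well defined and injective on Y_Q *)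
  (forall a b : adele R, is_adele a -> is_adele b ->
     (Qx_equiv a b <-> fd_iso (F_adele a) (F_adele b))) /\
  (* surjectivity onto isomorphism classes *)
  (forall (L : zmodType) (xi : L -> nat -> rat) (tau : L -> R),
     framed (abstract_fd xi tau) ->
     exists a : adele R, is_adele a /\ fd_iso (F_adele a) (abstract_fd xi tau)).
Proof.
split; first exact: framed_F_adele.
split=> [a b Af_a Af_b | L xi tau].
  by split; [apply: Qx_equiv_fd_iso | apply: fd_iso_Qx_equiv].
case=> _ [L_tf [[[x0 [_ x0_neq0]] L_dep] [xi_hom [xi_gen tau_add]]]].
exists (xi x0, tau x0); split; first exact: (xi_hom.1 x0 I).1.
exact: F_adele_iso_framed L_tf (fun x y => L_dep x y I I) x0_neq0 xi_hom xi_gen tau_add.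
Qed.
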